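(* For every $n\ge1$ and every $g\in\mathcal D_n$, $$a(N)\,v^N_n(g)=v^N_{n+1}(a\,g),\qquad a^*(N)\,v^N_n(g)=v^N_{n-1}(a^*g)+O(1/N),$$ where $O(1/N)$ denotes a vector of norm at most $C/N$ with $C>0$ independent of $N$.
   Context: Continuous side: $\mathcal X_{n,m}=\{(x_1,\dots,x_n)\in\mathbb{R}^n:x_1>\dots>x_m<\dots<x_n\}$, $\mathcal X_n=\bigcup_m\mathcal X_{n,m}$, $\mathbb 1_n,\mathbb 1_{n,m}$ their indicators; $\mathcal{CV}=\mathbb{C}\Lambda\oplus\bigoplus_{n\ge1}L^2(\mathcal X_n)$. $a=a(\mathbb 1_{[0,1]})$: $a\Lambda=\mathbb 1_{[0,1]}$, $(ag)(x,x_1,\dots,x_n)=\mathbb 1_{[0,1]}(x)\mathbb 1_{n+1}(x,x_1,\dots,x_n)g(x_1,\dots,x_n)$; $a^*$: $a^*\Lambda=0$, $a^*g=(\int_0^1g)\Lambda$ for $g\in L^2(\mathcal X_1)$, and $(a^*g)(\vec x)=\mathbb 1_{n,1}(\vec x)\int_0^{x_1}g(x,\vec x)dx+\int_{x_1}^1g(x,\vec x)dx$ for $g\in L^2(\mathcal X_{n+1})$. $\mathcal D_n$ ($n\ge1$) is the set of $g\in L^2(\mathcal X_n)$ that vanish outside $[0,1]^n$ and coincide on each $\mathcal X_{n,m}\cap[0,1]^n$ with a polynomial $g_{n,m}$; $\mathcal D_0=\mathbb{C}\Lambda$. Discrete side: $I=\mathbb{N}_+$, $I_n$ the set of $(i_1,\dots,i_n)$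 with $i_1>\dots>i_m<\dots<i_n$ for some $m$; $\mathcal{DV}$ with orthonormal basis $\{\Omega\}\cup\{e_{i_1}\otimes\dots\otimes e_{i_n}:(i_1,\dots,i_n)\in I_n\}$; $a_i\Omega=e_i$, $a_i(e_{i_1}\otimes\dots\otimes e_{i_n})=\mathbf 1[(i,i_1,\dots,i_n)\in I_{n+1}]\,e_i\otimes e_{i_1}\otimes\dots\otimes e_{i_n}$; $a(N)=N^{-1/2}\sum_{i=1}^Na_i$, $a^*(N)=a(N)^*$. Vectors: $v^N_0(c\Lambda)=c\Omega$ and $v^N_n(g)=N^{-n/2}\sum_{(i_1,\dots,i_n)\in I_n\cap[N]^n}g(i_1/N,\dots,i_n/N)\,e_{i_1}\otimes\dots\otimes e_{i_n}$ for $g\in\mathcal D_n$. *)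

From Stdlib Require Import Reals Lra Lia List ClassicalEpsilon.
Import ListNotations.
Open Scope R_scope.

Definition C : Type := (R * R)%type.
Definition C0 : C := (0, 0).
Definition Cadd (a b : C) : C := (fst a + fst b, snd a + snd b).
Definition Csub (a b : C) : C := (fst a - fst b, snd a - snd b).
Definition Cscale (r : R) (a : C) : C := (r * fst a, r * snd a).
Definition Cnorm2 (a : C) : R := fst a * fst a + snd a * snd a.
Definition Csum {A} (f : A -> C) (l : list A) : C := fold_right Cadd C0 (map f l).

Definition ind (P : Prop) : R :=
  if excluded_middle_informative P then 1 else 0.

(** Riemann integral over [a,b] (value of RiemannInt when integrable, else 0). *)
Definition Rint (f : R -> R) (a b : R) : R :=
  match excluded_middle_informative
          (exists I, exists pr : Riemann_integrable f a b, RiemannInt pr = I) with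
  | left h => proj1_sig (constructive_indefinite_description _ h)
  | right _ => 0
  end.
Definition Cint (f : R -> C) (a b : R) : C :=
  (Rint (fun x => fst (f x)) a b, Rint (fun x => snd (f x)) a b).

(** Polynomials (mpoly) in several variables with complex coefficients:
    finite sums of monomials c * x_1^{e_1} ... x_k^{e_k}. *)
Definition mpoly : Type := list (C * list nat).
Definition mono (e : list nat) (x : list R) : R :=
  fold_right Rmult 1 (map (fun p => pow (fst p) (snd p)) (combine x e)).
Definition peval (p : mpoly) (x : list R) : C :=
  Csum (fun ce => Cscale (mono (snd ce) x) (fst ce)) p.

(* points of R^n are lists of length n; x_1 is the head. *)
Definition inX (n m : nat) (x : list R) : Prop :=
  length x = n /\ (1 <= m <= n)%nat /\
  (forall k, (k + 1 < m)%nat -> nth k x 0 > nth (k + 1) x 0) /\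
  (forall k, (m <= k + 1)%nat -> (k + 1 < n)%nat -> nth k x 0 < nth (k + 1) x 0).
Definition inXn (n : nat) (x : list R) : Prop := exists m, inX n m x.
Definition inbox (x : list R) : Prop := Forall (fun t => 0 <= t <= 1) x.

(* Elements of L^2(X_n) are represented by functions list R -> C (values
   outside X_n are irrelevant); level 0 (C Lambda) is a function whose value
   at [] is the coefficient of Lambda. *)
Definition CVfun := list R -> C.

(* g (representative) belongs to D_n with polynomial pieces p m = g_{n,m} *)
Definition isD (n : nat) (p : nat -> mpoly) (g : CVfun) : Prop :=
  forall m x, inX n m x ->
    (inbox x -> g x = peval (p m) x) /\ (~ inbox x -> g x = C0).

(* a = a(1_[0,1]) applied to g in L^2(X_n) (or in C Lambda when n = 0) *)
Definition acont (n : nat) (g : CVfun) : CVfun :=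
  fun y => match y with
           | x :: xs => Cscale (ind (0 <= x <= 1) * ind (inXn (S n) y)) (g xs)
           | [] => C0
           end.

Definition astar (n : nat) (g : CVfun) : CVfun :=
  fun xs =>
    match n with
    | 1%nat => Cint (fun x => g [x]) 0 1
    | _ => match xs with
           | x1 :: _ =>
               Cadd (Cscale (ind (inX (n - 1) 1 xs)) (Cint (fun x => g (x :: xs)) 0 x1))
                    (Cint (fun x => g (x :: xs)) x1 1)
           | [] => C0
           end
    end.

(* A vector of DV is given by its coefficients: w = [] is Omega, and a word
   w = [i_1;...;i_n] in I_n gives e_{i_1} (x) ... (x) e_{i_n}. *)
Definition DVvec := list nat -> C.

Definition inXnat (n m : nat) (w : list nat) : Prop :=
  length w = n /\ (1 <= m <= n)%nat /\
  (forall k, (k + 1 < m)%nat -> (nth k w 0 > nth (k + 1) w 0)%nat) /\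
  (forall k, (m <= k + 1)%nat -> (k + 1 < n)%nat -> (nth k w 0 < nth (k + 1) w 0)%nat).
Definition inI (n : nat) (w : list nat) : Prop :=
  Forall (fun i => (1 <= i)%nat) w /\ exists m, inXnat n m w.
Definition inIw (w : list nat) : Prop := inI (length w) w.

Definition adisc (i : nat) (v : DVvec) : DVvec :=
  fun w => match w with
           | j :: w' => Cscale (ind (j = i /\ inIw (j :: w'))) (v w')
           | [] => C0
           end.
(* <e_w, a_i^* v> = <a_i e_w, v> *)
Definition adisc_star (i : nat) (v : DVvec) : DVvec :=
  fun w => Cscale (ind (inIw (i :: w))) (v (i :: w)).

Definition aN (N : nat) (v : DVvec) : DVvec :=
  fun w => Cscale (/ sqrt (INR N)) (Csum (fun i => adisc i v w) (seq 1 N)).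
Definition aStarN (N : nat) (v : DVvec) : DVvec :=
  fun w => Cscale (/ sqrt (INR N)) (Csum (fun i => adisc_star i v w) (seq 1 N)).

(* v^N_n(f): for n = 0 this is f([]) Omega *)
Definition vN (N n : nat) (f : CVfun) : DVvec :=
  fun w => Cscale (ind (length w = n /\ (n = 0%nat \/ inI n w) /\
                        Forall (fun i => (i <= N)%nat) w)
                   * (/ sqrt (INR N)) ^ n)
                  (f (map (fun i => INR i / INR N) w)).

Definition DVsub (u v : DVvec) : DVvec := fun w => Csub (u w) (v w).

Definition DVnorm_le (v : DVvec) (r : R) : Prop :=
  forall ws : list (list nat), NoDup ws ->
    fold_right Rplus 0 (map (fun w => Cnorm2 (v w)) ws) <= r ^ 2.

(** - Creation is exact: both sides have the same coefficient on every word,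
      because the monotone-word condition [(i_1,...,i_n) in I_n] is the
      chamber condition for the rescaled point [(i_1/N,...,i_n/N)].
    - Annihilation: the coefficient of [a^*(N) v^N_n(g) - v^N_{n-1}(a^* g)]
      on a word [w] vanishes unless [w] lies in [I_{n-1} ∩ [N]^{n-1}], and on
      such a word it is [N^{-(n-1)/2}] times the difference between a
      Riemann sum with mesh [1/N] and an integral of a polynomial in the
      first variable; it is thus bounded by [N^{-(n-1)/2} B/N], with [B]
      built from Lipschitz and sup bounds of the pieces [g_{n,m}].
      Summing the squares over the at most [N^{n-1}] relevant words gives a
      norm bound [O(1/N)]. *)

From Stdlib Require Import Reals Lra Lia List ClassicalEpsilon Classical.
From Coquelicot Require Import Hierarchy RInt Continuity.
From Pilot Require Import Defs.
Import ListNotations.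
Open Scope R_scope.

Lemma ind_true (P : Prop) : P -> ind P = 1.
Proof. intro H; unfold ind; destruct excluded_middle_informative; tauto. Qed.

Lemma ind_false (P : Prop) : ~ P -> ind P = 0.
Proof. intro H; unfold ind; destruct excluded_middle_informative; tauto. Qed.

Lemma ind_iff (P Q : Prop) : (P <-> Q) -> ind P = ind Q.
Proof.
  intro H; destruct (classic P).
  - rewrite !ind_true; tauto.
  - rewrite !ind_false; tauto.
Qed.

Lemma ind_and (P Q : Prop) : ind (P /\ Q) = ind P * ind Q.
Proof.
  destruct (classic P), (classic Q);
    [rewrite !ind_true by tauto
    | rewrite (ind_false (P /\ Q)), (ind_false Q) by tauto
    | rewrite (ind_false (P /\ Q)), (ind_false P) by tauto
    | rewrite (ind_false (P /\ Q)), (ind_false P) by tauto]; ring.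
Qed.

Lemma ind_idem (P : Prop) : ind P * ind P = ind P.
Proof. rewrite <- ind_and; apply ind_iff; tauto. Qed.

Definition rsum {A} (f : A -> R) (l : list A) : R := fold_right Rplus 0 (map f l).

Lemma rsum_app {A} (f : A -> R) l1 l2 : rsum f (l1 ++ l2) = rsum f l1 + rsum f l2.
Proof. unfold rsum; induction l1; simpl; [ring | rewrite IHl1; ring]. Qed.

Lemma rsum_ext_in {A} (f g : A -> R) l :
  (forall x, In x l -> f x = g x) -> rsum f l = rsum g l.
Proof. unfold rsum; induction l; simpl; intros; auto. rewrite H, IHl; auto. Qed.

Lemma rsum_scal {A} (f : A -> R) c l : rsum (fun x => c * f x) l = c * rsum f l.
Proof. unfold rsum; induction l; simpl; [ring | rewrite IHl; ring]. Qed.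

Lemma rsum_zero {A} (l : list A) : rsum (fun _ => 0) l = 0.
Proof. unfold rsum; induction l; simpl; [ring | rewrite IHl; ring]. Qed.

Lemma rsum_nonneg {A} (f : A -> R) l : (forall x, 0 <= f x) -> 0 <= rsum f l.
Proof. intro H; unfold rsum; induction l; simpl; [lra |]. specialize (H a); lra. Qed.

Lemma rsum_ge_term {A} (f : A -> R) l a : (forall x, 0 <= f x) -> In a l -> f a <= rsum f l.
Proof.
  intros H Ha. induction l as [|b l IH]; simpl in *; [contradiction |].
  pose proof (rsum_nonneg f l H). pose proof (H b). unfold rsum in *; simpl.
  destruct Ha as [-> | Ha]; [lra |]. specialize (IH Ha). lra.
Qed.

(** A complex identity or estimate is proved for the two components at once by
    proving it for an arbitrary functional [pi] that commutes with the
    operations used in [Defs]; [fst] and [snd] are such functionals. *)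

Record Cfunctional (pi : C -> R) : Prop := {
  cf_add : forall a b, pi (Cadd a b) = pi a + pi b;
  cf_sub : forall a b, pi (Csub a b) = pi a - pi b;
  cf_scale : forall r a, pi (Cscale r a) = r * pi a;
  cf_zero : pi C0 = 0;
  cf_int : forall f a b, pi (Cint f a b) = Rint (fun x => pi (f x)) a b;
  cf_bound : forall c, Rabs (pi c) <= Rabs (fst c) + Rabs (snd c) }.

Lemma Cfunctional_fst : Cfunctional fst.
Proof. split; intros; simpl; try ring; try reflexivity. pose proof (Rabs_pos (snd c)); lra. Qed.

Lemma Cfunctional_snd : Cfunctional snd.
Proof. split; intros; simpl; try ring; try reflexivity. pose proof (Rabs_pos (fst c)); lra. Qed.

Lemma Cfunctional_Csum pi {A} (f : A -> C) l :
  Cfunctional pi -> pi (Csum f l) = rsum (fun x => pi (f x)) l.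
Proof.
  intro P; unfold Csum, rsum; induction l; simpl.
  - apply (cf_zero _ P).
  - rewrite (cf_add _ P), IHl; auto.
Qed.

Lemma C_ext_functional (a b : C) : (forall pi, Cfunctional pi -> pi a = pi b) -> a = b.
Proof.
  intro H. destruct a as [a1 a2], b as [b1 b2].
  rewrite (H fst Cfunctional_fst), (H snd Cfunctional_snd) at 1. reflexivity.
Qed.

Lemma Cnorm2_le (z : C) e : Rabs (fst z) <= e -> Rabs (snd z) <= e -> Cnorm2 z <= 2 * e ^ 2.
Proof.
  destruct z as [a b]; unfold Cnorm2; simpl; intros H1 H2.
  assert (Ea : a * a = Rabs a * Rabs a)
    by (rewrite <- Rabs_mult; symmetry; apply Rabs_pos_eq; nra).
  assert (Eb : b * b = Rabs b * Rabs b)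
    by (rewrite <- Rabs_mult; symmetry; apply Rabs_pos_eq; nra).
  pose proof (Rabs_pos a); pose proof (Rabs_pos b). rewrite Ea, Eb; nra.
Qed.

(** ** Chambers *)

Lemma inX_tail n m x y : inX (S n) m (x :: y) -> (1 <= n)%nat -> inX n (Nat.max 1 (m - 1)) y.
Proof.
  intros [Hl [Hm [Hd Hi]]] Hn. simpl in Hl. split; [lia |]. split; [lia |]. split.
  - intros k Hk. apply (Hd (S k)). lia.
  - intros k H1 H2. apply (Hi (S k)); simpl; lia.
Qed.

Lemma inX_cons_desc n m x y : inX n m y -> x > nth 0 y 0 -> inX (S n) (S m) (x :: y).
Proof.
  intros [Hl [Hm [Hd Hi]]] Hx. split; [simpl; lia |]. split; [lia |]. split.
  - intros [|k] Hk; [exact Hx |]. apply (Hd k). lia.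
  - intros [|k] H1 H2; [lia |]. apply Hi; simpl in *; lia.
Qed.

Lemma inX_cons_asc n x y : inX n 1 y -> x < nth 0 y 0 -> (1 <= n)%nat -> inX (S n) 1 (x :: y).
Proof.
  intros [Hl [Hm [Hd Hi]]] Hx Hn. split; [simpl; lia |]. split; [lia |]. split.
  - intros k Hk. lia.
  - intros [|k] H1 H2; [exact Hx |]. apply Hi; simpl in *; lia.
Qed.

Lemma inX_cons_inv n m x y : inX (S n) m (x :: y) -> (1 <= n)%nat ->
  x > nth 0 y 0 \/ (x < nth 0 y 0 /\ inX n 1 y).
Proof.
  intros H Hn. pose proof H as [Hl [Hm [Hd Hi]]].
  destruct (Nat.eq_dec m 1) as [-> | Hm1].
  - right. split.
    + apply (Hi 0%nat); simpl in *; lia.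
    + apply inX_tail in H; auto.
  - left. apply (Hd 0%nat). lia.
Qed.

Definition gridpt (N i : nat) : R := INR i / INR N.

Lemma nth_map_gridpt N w k : nth k (map (gridpt N) w) 0 = gridpt N (nth k w 0%nat).
Proof.
  revert k; induction w; intros [|k]; simpl; auto; unfold gridpt; simpl; unfold Rdiv; ring.
Qed.

Lemma gridpt_lt N a b : (1 <= N)%nat -> (a < b)%nat <-> gridpt N a < gridpt N b.
Proof.
  intro HN. unfold gridpt. assert (0 < / INR N) by (apply Rinv_0_lt_compat, lt_0_INR; lia).
  split; intro H'.
  - apply Rmult_lt_compat_r; auto. apply lt_INR; auto.
  - apply INR_lt. apply Rmult_lt_reg_r with (/ INR N); auto.
Qed.

Lemma gridpt_le N a b : (1 <= N)%nat -> (a <= b)%nat -> gridpt N a <= gridpt N b.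
Proof.
  intros HN H. destruct (Nat.eq_dec a b) as [-> | Hab]; [lra |].
  left; apply gridpt_lt; auto; lia.
Qed.

Lemma gridpt_0 N : gridpt N 0 = 0.
Proof. unfold gridpt; simpl; unfold Rdiv; ring. Qed.

Lemma gridpt_N N : (1 <= N)%nat -> gridpt N N = 1.
Proof. intro HN. unfold gridpt. field. apply not_0_INR. lia. Qed.

Definition box01 (t : R) : Prop := 0 <= t <= 1.

Lemma gridpt_box N i : (1 <= N)%nat -> (i <= N)%nat -> box01 (gridpt N i).
Proof.
  intros HN Hi. unfold box01. rewrite <- (gridpt_0 N), <- (gridpt_N N) by auto.
  split; apply gridpt_le; auto; lia.
Qed.

Lemma box_map_gridpt N w : (1 <= N)%nat -> Forall (fun i => (i <= N)%nat) w ->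
  Forall box01 (map (gridpt N) w).
Proof. intros HN H; induction H; simpl; constructor; auto. apply gridpt_box; auto. Qed.

(** Rescaling by [1/N] preserves the order, so a word lies in a discrete
    chamber exactly when its grid point lies in the continuous one. *)
Lemma inXnat_gridpt N n m w : (1 <= N)%nat -> inXnat n m w <-> inX n m (map (gridpt N) w).
Proof.
  intro HN. unfold inXnat, inX. rewrite length_map.
  split; intros [Hl [Hm [Hd Hi]]]; (split; [auto |]); (split; [auto |]); split.
  - intros k Hk; rewrite !nth_map_gridpt. apply gridpt_lt; auto. apply Hd; auto.
  - intros k H1 H2; rewrite !nth_map_gridpt. apply gridpt_lt; auto.
  - intros k Hk. specialize (Hd k Hk); rewrite !nth_map_gridpt in Hd.
    apply gridpt_lt in Hd; auto.
  - intros k H1 H2. specialize (Hi k H1 H2); rewrite !nth_map_gridpt in Hi.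
    apply gridpt_lt in Hi; auto.
Qed.

(** The discrete chamber lemmas follow from the continuous ones at [N = 1]. *)
Lemma inXnat_cons_desc k m w i : inXnat k m w -> (i > nth 0 w 0)%nat -> inXnat (S k) (S m) (i :: w).
Proof.
  intros H Hi. apply (inXnat_gridpt 1); auto. apply (inXnat_gridpt 1) in H; auto. simpl.
  apply inX_cons_desc; auto. rewrite nth_map_gridpt. apply gridpt_lt; auto.
Qed.

Lemma inXnat_cons_asc k w i : inXnat k 1 w -> (i < nth 0 w 0)%nat -> (1 <= k)%nat ->
  inXnat (S k) 1 (i :: w).
Proof.
  intros H Hi Hk. apply (inXnat_gridpt 1); auto. apply (inXnat_gridpt 1) in H; auto. simpl.
  apply inX_cons_asc; auto. rewrite nth_map_gridpt. apply gridpt_lt; auto.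
Qed.

Lemma inXnat_cons_inv k m w i : inXnat (S k) m (i :: w) -> (1 <= k)%nat ->
  (i > nth 0 w 0)%nat \/ ((i < nth 0 w 0)%nat /\ inXnat k 1 w).
Proof.
  intros H Hk. apply (inXnat_gridpt 1) in H; auto. simpl in H. apply inX_cons_inv in H; auto.
  rewrite nth_map_gridpt in H. destruct H as [H | [H1 H2]].
  - left. apply (gridpt_lt 1); auto.
  - right. split; [apply (gridpt_lt 1) | apply (inXnat_gridpt 1)]; auto.
Qed.

Lemma inI_tail k w i : inI (S k) (i :: w) -> (1 <= k)%nat -> inI k w.
Proof.
  intros [Hp [m Hm]] Hk. split; [exact (Forall_inv_tail Hp) |].
  exists (Nat.max 1 (m - 1)). apply (inXnat_gridpt 1); auto.
  apply (inXnat_gridpt 1) in Hm; auto. simpl in Hm. apply inX_tail in Hm; auto.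
Qed.

Lemma inI_cons_iff k i j w' : (1 <= k)%nat -> (1 <= i)%nat -> inI k (j :: w') ->
  (inI (S k) (i :: j :: w') <-> (j < i)%nat \/ ((i < j)%nat /\ inXnat k 1 (j :: w'))).
Proof.
  intros Hk Hi [Hp [m Hm]]. split.
  - intros [_ [m' Hm']].
    destruct (inXnat_cons_inv _ _ _ _ Hm' Hk) as [H | [H1 H2]]; simpl in *; [left; lia | right; auto].
  - intros H. split; [constructor; auto |]. destruct H as [H | [H1 H2]].
    + exists (S m). apply inXnat_cons_desc; auto.
    + exists 1%nat. apply inXnat_cons_asc; auto.
Qed.

(** ** Polynomials on the unit cube *)

Lemma pow_box t k : box01 t -> 0 <= t ^ k <= 1.
Proof.
  intros [H1 H2]; induction k as [|k IH]; simpl; [lra |]. destruct IH.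
  split; [apply Rmult_le_pos; lra |]. rewrite <- (Rmult_1_r 1). apply Rmult_le_compat; lra.
Qed.

Lemma mono_box e y : Forall box01 y -> 0 <= mono e y <= 1.
Proof.
  revert e; induction y as [|a y IH]; intros [|k e] Hy; try (unfold mono; simpl; lra).
  change (mono (k :: e) (a :: y)) with (a ^ k * mono e y).
  inversion Hy; subst. pose proof (pow_box a k H1). specialize (IH e H2).
  split; [apply Rmult_le_pos; lra |]. rewrite <- (Rmult_1_r 1). apply Rmult_le_compat; lra.
Qed.

Lemma pow_lip x x' k : box01 x -> box01 x' -> Rabs (x ^ k - x' ^ k) <= INR k * Rabs (x - x').
Proof.
  intros Hx Hx'. induction k as [|k IH]; simpl.
  - rewrite Rminus_diag, Rabs_R0. lra.
  - replace (x * x ^ k - x' * x' ^ k) with (x * (x ^ k - x' ^ k) + x' ^ k * (x - x')) by ring.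
    eapply Rle_trans; [apply Rabs_triang |]. rewrite !Rabs_mult.
    pose proof (pow_box x' k Hx'). unfold box01 in *.
    rewrite (Rabs_pos_eq x), (Rabs_pos_eq (x' ^ k)) by lra.
    pose proof (Rabs_pos (x ^ k - x' ^ k)). pose proof (Rabs_pos (x - x')).
    assert (x * Rabs (x ^ k - x' ^ k) <= INR k * Rabs (x - x')) by nra.
    destruct k; simpl INR in *; nra.
Qed.

Definition head_exp (e : list nat) : nat := match e with [] => 0%nat | k :: _ => k end.

Lemma mono_cons e x y :
  mono e (x :: y) = match e with [] => 1 | k :: e' => x ^ k * mono e' y end.
Proof. destruct e; reflexivity. Qed.

Lemma mono_lip e x x' y : Forall box01 y -> box01 x -> box01 x' ->
  Rabs (mono e (x :: y) - mono e (x' :: y)) <= INR (head_exp e) * Rabs (x - x').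
Proof.
  intros Hy Hx Hx'. rewrite !mono_cons. destruct e as [|k e]; simpl.
  - rewrite Rminus_diag, Rabs_R0. lra.
  - pose proof (mono_box e y Hy).
    replace (x ^ k * mono e y - x' ^ k * mono e y) with ((x ^ k - x' ^ k) * mono e y) by ring.
    rewrite Rabs_mult, (Rabs_pos_eq (mono e y)) by lra.
    pose proof (pow_lip x x' k Hx Hx'). pose proof (Rabs_pos (x ^ k - x' ^ k)). nra.
Qed.

Lemma peval_cons ce P z :
  peval (ce :: P) z = Cadd (Cscale (mono (snd ce) z) (fst ce)) (peval P z).
Proof. reflexivity. Qed.

Definition cabs (c : C) : R := Rabs (fst c) + Rabs (snd c).
Definition poly_lip (P : mpoly) : R := rsum (fun ce => INR (head_exp (snd ce)) * cabs (fst ce)) P.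
Definition poly_sup (P : mpoly) : R := rsum (fun ce => cabs (fst ce)) P.

Lemma cabs_nonneg c : 0 <= cabs c.
Proof. unfold cabs. pose proof (Rabs_pos (fst c)). pose proof (Rabs_pos (snd c)). lra. Qed.

Lemma poly_lip_nonneg P : 0 <= poly_lip P.
Proof. apply rsum_nonneg. intros. apply Rmult_le_pos; [apply pos_INR | apply cabs_nonneg]. Qed.

Lemma poly_sup_nonneg P : 0 <= poly_sup P.
Proof. apply rsum_nonneg. intros. apply cabs_nonneg. Qed.

Lemma peval_lip pi P x x' y : Cfunctional pi -> Forall box01 y -> box01 x -> box01 x' ->
  Rabs (pi (peval P (x :: y)) - pi (peval P (x' :: y))) <= poly_lip P * Rabs (x - x').
Proof.
  intros Pi Hy Hx Hx'. induction P as [|ce P IH].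
  - unfold peval, Csum; simpl. rewrite Rminus_diag, Rabs_R0. unfold poly_lip, rsum; simpl; lra.
  - rewrite !peval_cons, !(cf_add _ Pi), !(cf_scale _ Pi).
    set (dm := mono (snd ce) (x :: y) - mono (snd ce) (x' :: y)).
    replace (_ - _) with (dm * pi (fst ce) + (pi (peval P (x :: y)) - pi (peval P (x' :: y))))
      by (unfold dm; ring).
    eapply Rle_trans; [apply Rabs_triang |]. rewrite Rabs_mult.
    pose proof (mono_lip (snd ce) x x' y Hy Hx Hx'). pose proof (cf_bound _ Pi (fst ce)).
    unfold poly_lip, rsum in *; simpl. fold (cabs (fst ce)) in H0.
    pose proof (Rabs_pos (pi (fst ce))). pose proof (Rabs_pos (x - x')).
    pose proof (Rabs_pos dm). pose proof (pos_INR (head_exp (snd ce))).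
    assert (Rabs dm * Rabs (pi (fst ce)) <= INR (head_exp (snd ce)) * Rabs (x - x') * cabs (fst ce))
      by (apply Rmult_le_compat; auto).
    nra.
Qed.

Lemma peval_bound pi P z : Cfunctional pi -> Forall box01 z -> Rabs (pi (peval P z)) <= poly_sup P.
Proof.
  intros Pi Hz. induction P as [|ce P IH].
  - unfold peval, Csum; simpl. rewrite (cf_zero _ Pi), Rabs_R0. unfold poly_sup, rsum; simpl; lra.
  - rewrite peval_cons, (cf_add _ Pi), (cf_scale _ Pi). eapply Rle_trans; [apply Rabs_triang |].
    rewrite Rabs_mult. pose proof (mono_box (snd ce) z Hz).
    rewrite (Rabs_pos_eq (mono _ _)) by lra.
    pose proof (cf_bound _ Pi (fst ce)). fold (cabs (fst ce)) in H0. unfold poly_sup, rsum in *; simpl.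
    pose proof (Rabs_pos (pi (fst ce))). nra.
Qed.

Lemma pow_continuous k x : continuous (fun t => t ^ k) x.
Proof.
  induction k; simpl; [apply continuous_const |].
  apply (continuous_mult (fun t => t) (fun t => t ^ k)); auto. apply continuous_id.
Qed.

Lemma peval_continuous pi P y x : Cfunctional pi -> continuous (fun t => pi (peval P (t :: y))) x.
Proof.
  intros Pi. induction P as [|ce P IH].
  - unfold peval, Csum; simpl. apply continuous_const.
  - apply continuous_ext with
      (fun t => plus (mult (mono (snd ce) (t :: y)) (pi (fst ce))) (pi (peval P (t :: y)))).
    { intros t. rewrite peval_cons, (cf_add _ Pi), (cf_scale _ Pi). reflexivity. }
    apply (continuous_plus (fun t => mult (mono (snd ce) (t :: y)) (pi (fst ce)))); auto.
    apply (continuous_mult (fun t => mono (snd ce) (t :: y)) (fun _ => pi (fst ce)));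
      [| apply continuous_const].
    apply continuous_ext with (fun t => match snd ce with [] => 1 | k :: e' => t ^ k * mono e' y end).
    { intros; rewrite mono_cons; reflexivity. }
    destruct (snd ce) as [|k e]; [apply continuous_const |].
    apply (continuous_mult (fun t => t ^ k) (fun _ => mono e y));
      [apply pow_continuous | apply continuous_const].
Qed.

(** ** Riemann sums of Lipschitz functions *)

Definition lip01 (q : R -> R) (L : R) : Prop :=
  forall x y, box01 x -> box01 y -> Rabs (q x - q y) <= L * Rabs (x - y).

Lemma ex_RInt_continuous_fun (q : R -> R) a b : (forall x, continuous q x) -> ex_RInt q a b.
Proof. intros H; apply (ex_RInt_continuous (V := R_CompleteNormedModule)); intros; apply H. Qed.

Lemma cell_error q L v w : (forall x, continuous q x) -> lip01 q L ->
  0 <= v -> v <= w -> w <= 1 -> Rabs (q w * (w - v) - RInt q v w) <= L * (w - v) ^ 2.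
Proof.
  intros Hc HL H0 H1 H2.
  assert (HL0 : 0 <= L).
  { assert (H01 : Rabs (q 0 - q 1) <= L * Rabs (0 - 1)) by (apply HL; unfold box01; lra).
    rewrite Rminus_0_l, Rabs_Ropp, Rabs_R1 in H01. pose proof (Rabs_pos (q 0 - q 1)). lra. }
  assert (E : RInt q v w - q w * (w - v) = RInt (fun t => q t - q w) v w).
  { rewrite (RInt_minus q (fun _ => q w))
      by (apply ex_RInt_continuous_fun; auto; intros; apply continuous_const).
    rewrite RInt_const. unfold minus, plus, opp, scal; simpl. unfold mult; simpl. ring. }
  rewrite Rabs_minus_sym, E.
  replace (L * (w - v) ^ 2) with ((w - v) * (L * (w - v))) by ring.
  apply abs_RInt_le_const; auto.
  - apply (ex_RInt_minus q (fun _ => q w)); apply ex_RInt_continuous_fun; auto.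
    intros; apply continuous_const.
  - intros t Ht. eapply Rle_trans; [apply HL; unfold box01; lra |].
    rewrite Rabs_left1 by lra. nra.
Qed.

Lemma riemann_sum_error q L N a d : (1 <= N)%nat -> (a + d <= N)%nat ->
  (forall x, continuous q x) -> lip01 q L ->
  Rabs (rsum (fun i => q (gridpt N i) / INR N) (seq (S a) d) - RInt q (gridpt N a) (gridpt N (a + d)))
    <= INR d * L / INR N ^ 2.
Proof.
  intros HN Had Hc HL. assert (HN' : 0 < INR N) by (apply lt_0_INR; lia).
  induction d as [|d IH].
  - rewrite Nat.add_0_r, RInt_point. unfold rsum; simpl. unfold zero; simpl.
    rewrite Rminus_0_r, Rabs_R0. unfold Rdiv; lra.
  - rewrite seq_S, rsum_app.
    change (rsum (fun i => q (gridpt N i) / INR N) [(S a + d)%nat])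
      with (q (gridpt N (S a + d)) / INR N + 0).
    rewrite <- (RInt_Chasles q (gridpt N a) (gridpt N (a + d)) (gridpt N (a + S d)))
      by (apply ex_RInt_continuous_fun; auto).
    change (plus ?x ?y) with (x + y).
    assert (Hv : gridpt N (a + S d) - gridpt N (a + d) = / INR N).
    { unfold gridpt. rewrite !plus_INR, S_INR. field. lra. }
    pose proof (cell_error q L (gridpt N (a + d)) (gridpt N (a + S d)) Hc HL) as Hcell.
    rewrite Hv in Hcell. replace (S a + d)%nat with (a + S d)%nat by lia.
    destruct (gridpt_box N (a + d) HN ltac:(lia)) as [Hlo _].
    destruct (gridpt_box N (a + S d) HN ltac:(lia)) as [_ Hhi].
    pose proof (Rinv_0_lt_compat _ HN'). specialize (Hcell Hlo ltac:(lra) Hhi).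
    specialize (IH ltac:(lia)).
    match goal with |- Rabs (?A + (?B + 0) - (?C + ?D)) <= _ =>
      replace (A + (B + 0) - (C + D)) with ((A - C) + (B - D)) by ring end.
    eapply Rle_trans; [apply Rabs_triang |].
    change (q (gridpt N (a + S d)) / INR N) with (q (gridpt N (a + S d)) * / INR N).
    rewrite S_INR.
    replace ((INR d + 1) * L / INR N ^ 2) with (INR d * L / INR N ^ 2 + L * (/ INR N) ^ 2)
      by (field; lra).
    lra.
Qed.

Lemma Rint_RInt (h q : R -> R) a b : (forall x, Rmin a b < x < Rmax a b -> h x = q x) ->
  (forall x, continuous q x) -> Rint h a b = RInt q a b.
Proof.
  intros Hh Hc. assert (Ex : ex_RInt h a b).
  { apply (ex_RInt_ext q); [intros; symmetry; auto | apply ex_RInt_continuous_fun; auto]. }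
  unfold Rint. destruct excluded_middle_informative as [E | nE].
  - destruct (constructive_indefinite_description _ E) as [I [pr Hpr]]. simpl.
    rewrite <- Hpr, <- RInt_Reals. apply RInt_ext. auto.
  - exfalso. apply nE. pose proof (ex_RInt_Reals_0 _ _ _ Ex) as pr.
    exists (RiemannInt pr), pr. reflexivity.
Qed.

Lemma cells_le_N L N d : (1 <= N)%nat -> (d <= N)%nat -> 0 <= L ->
  INR d * L / INR N ^ 2 <= L / INR N.
Proof.
  intros HN Hd HL. assert (HN' : 0 < INR N) by (apply lt_0_INR; lia).
  apply Rle_trans with (INR N * L / INR N ^ 2); [| right; field; lra].
  unfold Rdiv. apply Rmult_le_compat_r; [left; apply Rinv_0_lt_compat, pow_lt; auto |].
  apply Rmult_le_compat_r; auto. apply le_INR; lia.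
Qed.

Lemma riemann_tail_error (h q : R -> R) L N j : (1 <= N)%nat -> (j <= N)%nat -> 0 <= L ->
  (forall x, continuous q x) -> lip01 q L -> (forall x, gridpt N j < x <= 1 -> h x = q x) ->
  Rabs (rsum (fun i => h (gridpt N i)) (seq (S j) (N - j)) / INR N - Rint h (gridpt N j) 1)
    <= L / INR N.
Proof.
  intros HN Hj HL0 Hc HL Hh.
  assert (Hj1 : gridpt N j <= 1) by (rewrite <- (gridpt_N N) by auto; apply gridpt_le; auto).
  rewrite (Rint_RInt h q)
    by (auto; intros x Hx; rewrite Rmin_left, Rmax_right in Hx by lra; apply Hh; lra).
  unfold Rdiv at 1. rewrite Rmult_comm, <- rsum_scal.
  rewrite (rsum_ext_in _ (fun i => q (gridpt N i) / INR N)).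
  2: { intros i Hi. apply in_seq in Hi. rewrite Hh; [unfold Rdiv; ring |].
       split; [apply gridpt_lt; auto; lia |].
       rewrite <- (gridpt_N N) by auto; apply gridpt_le; auto; lia. }
  pose proof (riemann_sum_error q L N j (N - j) HN ltac:(lia) Hc HL) as Herr.
  replace (j + (N - j))%nat with N in Herr by lia. rewrite gridpt_N in Herr by auto.
  eapply Rle_trans; [exact Herr | apply cells_le_N; auto; lia].
Qed.

Lemma riemann_head_error (h q : R -> R) L M N j : (1 <= N)%nat -> (1 <= j <= N)%nat -> 0 <= L ->
  (forall x, continuous q x) -> lip01 q L ->
  (forall x, 0 <= x < gridpt N j -> h x = q x) -> Rabs (q (gridpt N j)) <= M ->
  Rabs (rsum (fun i => h (gridpt N i)) (seq 1 (j - 1)) / INR N - Rint h 0 (gridpt N j))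
    <= (L + M) / INR N.
Proof.
  intros HN Hj HL0 Hc HL Hh HM. assert (HN' : 0 < INR N) by (apply lt_0_INR; lia).
  assert (Hj0 : 0 < gridpt N j) by (rewrite <- (gridpt_0 N); apply gridpt_lt; auto; lia).
  rewrite (Rint_RInt h q)
    by (auto; intros x Hx; rewrite Rmin_left, Rmax_right in Hx by lra; apply Hh; lra).
  unfold Rdiv at 1. rewrite Rmult_comm, <- rsum_scal.
  rewrite (rsum_ext_in _ (fun i => q (gridpt N i) / INR N)).
  2: { intros i Hi. apply in_seq in Hi. rewrite Hh; [unfold Rdiv; ring |].
       split; [rewrite <- (gridpt_0 N); apply gridpt_le; auto; lia | apply gridpt_lt; auto; lia]. }
  pose proof (riemann_sum_error q L N 0 j HN ltac:(lia) Hc HL) as Herr.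
  rewrite Nat.add_0_l, gridpt_0 in Herr.
  replace j with (S (j - 1)) in Herr at 1 by lia. rewrite seq_S, rsum_app in Herr.
  replace (1 + (j - 1))%nat with j in Herr by lia.
  change (rsum (fun i => q (gridpt N i) / INR N) [j]) with (q (gridpt N j) / INR N + 0) in Herr.
  match goal with |- Rabs (?A - ?B) <= _ =>
    replace (A - B) with ((A + (q (gridpt N j) / INR N + 0) - B) - q (gridpt N j) / INR N) by ring end.
  eapply Rle_trans; [apply Rabs_triang |]. rewrite Rabs_Ropp.
  pose proof (cells_le_N L N j HN ltac:(lia) HL0).
  assert (Rabs (q (gridpt N j) / INR N) <= M / INR N).
  { unfold Rdiv. rewrite Rabs_mult, (Rabs_pos_eq (/ INR N)) by (left; apply Rinv_0_lt_compat; auto).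
    apply Rmult_le_compat_r; auto. left; apply Rinv_0_lt_compat; auto. }
  unfold Rdiv in *. lra.
Qed.

Fixpoint words (N k : nat) : list (list nat) :=
  match k with
  | 0%nat => [[]]
  | S k => flat_map (fun i => map (cons i) (words N k)) (seq 1 N)
  end.

Lemma words_in N w : Forall (fun i => 1 <= i <= N)%nat w -> In w (words N (length w)).
Proof.
  induction w as [|a w IH]; intros H; simpl; auto. apply in_flat_map. exists a.
  inversion H; subst. split; [apply in_seq; lia | apply in_map; auto].
Qed.

Lemma words_length N k : length (words N k) = (N ^ k)%nat.
Proof.
  induction k as [|k IH]; simpl; auto.
  assert (Hfm : forall l : list nat,
    length (flat_map (fun i => map (cons i) (words N k)) l) = (length l * length (words N k))%nat).
  { induction l; simpl; auto. rewrite length_app, length_map, IHl. reflexivity. }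
  rewrite Hfm, length_seq, IH. reflexivity.
Qed.

Lemma rsum_le_support (f : list nat -> R) (E : list (list nat)) c ws : NoDup ws -> 0 <= c ->
  (forall w, ~ In w E -> f w = 0) -> (forall w, f w <= c) -> rsum f ws <= c * INR (length E).
Proof.
  intros Hnd Hc H0 H1.
  set (inE := fun w => if in_dec (list_eq_dec Nat.eq_dec) w E then true else false).
  assert (Hfilter : rsum f ws <= c * INR (length (filter inE ws))).
  { clear Hnd. unfold rsum. induction ws as [|a ws IH]; simpl; [lra |].
    unfold inE at 1. destruct in_dec as [Ha | Ha].
    - simpl length. rewrite S_INR. specialize (H1 a). lra.
    - rewrite H0 by auto. lra. }
  assert (Hlen : (length (filter inE ws) <= length E)%nat).
  { apply NoDup_incl_length; [apply NoDup_filter; auto |].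
    intros x Hx. apply filter_In in Hx. destruct Hx as [_ Hx].
    unfold inE in Hx. destruct in_dec; auto; discriminate. }
  apply le_INR in Hlen. eapply Rle_trans; [exact Hfilter |]. apply Rmult_le_compat_l; auto.
Qed.

Lemma DVnorm_le_of_support (v : DVvec) (E : list (list nat)) c r :
  (forall w, ~ In w E -> v w = C0) ->
  (forall w, Rabs (fst (v w)) <= c /\ Rabs (snd (v w)) <= c) ->
  2 * c ^ 2 * INR (length E) <= r ^ 2 -> DVnorm_le v r.
Proof.
  intros Hsupp Hbound Hr ws Hnd. eapply Rle_trans; [| exact Hr].
  destruct (Hbound []) as [Hc _]. pose proof (Rabs_pos (fst (v []))).
  apply (rsum_le_support (fun w => Cnorm2 (v w))); auto.
  - pose proof (pow2_ge_0 c). lra.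
  - intros w Hw. rewrite Hsupp by auto. unfold Cnorm2, C0; simpl. ring.
  - intros w. destruct (Hbound w). apply Cnorm2_le; auto.
Qed.

(** ** The creation identity *)

Definition vN_support (N n : nat) (w : list nat) : Prop :=
  length w = n /\ (n = 0%nat \/ inI n w) /\ Forall (fun i => (i <= N)%nat) w.

Lemma vN_coeff pi N n (f : CVfun) w : Cfunctional pi ->
  pi (vN N n f w) = ind (vN_support N n w) * (/ sqrt (INR N)) ^ n * pi (f (map (gridpt N) w)).
Proof. intro P. unfold vN. rewrite (cf_scale _ P). reflexivity. Qed.

Lemma rsum_delta j (P : Prop) X a len :
  rsum (fun i => ind (j = i /\ P) * X) (seq a len) = ind ((a <= j < a + len)%nat /\ P) * X.
Proof.
  revert a; induction len as [|len IH]; intros a; simpl.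
  - rewrite ind_false by lia. unfold rsum; simpl; ring.
  - unfold rsum in *; simpl. rewrite IH.
    destruct (Nat.eq_dec j a) as [-> | Hja].
    + rewrite (ind_false ((S a <= a < _)%nat /\ P)) by lia.
      rewrite (ind_iff (a = a /\ P) ((a <= a < a + S len)%nat /\ P))
        by (split; intros [? ?]; split; auto; lia). ring.
    + rewrite (ind_false (j = a /\ P)) by tauto.
      rewrite (ind_iff ((S a <= j < S a + len)%nat /\ P) ((a <= j < a + S len)%nat /\ P))
        by (split; intros [? ?]; split; auto; lia). ring.
Qed.

Lemma creation_support N n j w' : (1 <= n)%nat -> (1 <= N)%nat ->
  ((1 <= j < 1 + N)%nat /\ inIw (j :: w')) /\ vN_support N n w' <->
  vN_support N (S n) (j :: w') /\
    (0 <= gridpt N j <= 1 /\ inXn (S n) (gridpt N j :: map (gridpt N) w')).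
Proof.
  intros Hn HN. unfold inIw, vN_support. simpl length. split.
  - intros [[Hj Hw] [Hl [_ HF]]]. subst n.
    split; [split; [reflexivity | split; [right; exact Hw | constructor; [lia | exact HF]]] |].
    split; [apply gridpt_box; auto; lia |].
    destruct Hw as [_ [m Hm]]. exists m. apply (inXnat_gridpt N) in Hm; auto.
  - intros [[Hl [[H0 | Hw] HF]] _]; [lia |]. injection Hl as Hl.
    pose proof (Forall_inv HF) as HjN. pose proof (Forall_inv (proj1 Hw)) as Hj1.
    simpl in HjN, Hj1. rewrite Hl.
    split; [split; [lia | exact Hw] |].
    split; [reflexivity | split; [right; apply (inI_tail _ _ j); auto | exact (Forall_inv_tail HF)]].
Qed.

Lemma creation_identity n (g : CVfun) N w : (1 <= n)%nat -> (1 <= N)%nat ->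
  aN N (vN N n g) w = vN N (S n) (acont n g) w.
Proof.
  intros Hn HN. apply C_ext_functional; intros pi P.
  destruct w as [|j w'].
  - unfold aN, vN, acont, adisc. rewrite !(cf_scale _ P), (Cfunctional_Csum _ _ _ P), (cf_zero _ P).
    rewrite rsum_zero. simpl map. cbv iota. rewrite (cf_zero _ P). ring.
  - unfold aN. rewrite (cf_scale _ P), (Cfunctional_Csum _ _ _ P). unfold adisc.
    rewrite (rsum_ext_in _ (fun i => ind (j = i /\ inIw (j :: w')) * pi (vN N n g w')))
      by (intros; apply (cf_scale _ P)).
    rewrite rsum_delta, !vN_coeff by auto. unfold acont. simpl map. cbv beta iota. rewrite (cf_scale _ P).
    match goal with |- ?s * (ind ?A * (ind ?B * ?sn * ?G)) = ind ?B' * _ * (ind ?C * ind ?D * _) =>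
      transitivity (s * sn * G * ind (A /\ B)); [rewrite (ind_and A B); ring |];
      rewrite (ind_iff _ _ (creation_support N n j w' Hn HN)), (ind_and B' (C /\ D)), (ind_and C D)
    end.
    simpl. ring.
Qed.

(** ** Coefficients of the annihilation defect *)

Definition astar_defect (N n : nat) (g : CVfun) : DVvec :=
  DVsub (aStarN N (vN N n g)) (vN N (n - 1) (astar n g)).

Lemma aStarN_coeff pi N n g w : Cfunctional pi ->
  pi (aStarN N (vN N n g) w) =
  / sqrt (INR N) * rsum (fun i => ind (inIw (i :: w)) * (ind (vN_support N n (i :: w))
                         * (/ sqrt (INR N)) ^ n * pi (g (map (gridpt N) (i :: w))))) (seq 1 N).
Proof.
  intro P. unfold aStarN. rewrite (cf_scale _ P), (Cfunctional_Csum _ _ _ P). f_equal.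
  apply rsum_ext_in. intros i _. unfold adisc_star. rewrite (cf_scale _ P), vN_coeff; auto.
Qed.

Lemma inv_sqrt_sq N : (1 <= N)%nat -> / sqrt (INR N) * / sqrt (INR N) = / INR N.
Proof.
  intro HN. assert (0 < INR N) by (apply lt_0_INR; lia). rewrite <- Rinv_mult, sqrt_sqrt; lra.
Qed.

Lemma astar_defect_outside pi N n g w : Cfunctional pi -> (1 <= n)%nat ->
  ~ vN_support N (n - 1) w -> pi (astar_defect N n g w) = 0.
Proof.
  intros P Hn Hw. unfold astar_defect, DVsub. rewrite (cf_sub _ P), aStarN_coeff, vN_coeff by auto.
  rewrite (ind_false (vN_support N (n - 1) w)) by auto.
  rewrite (rsum_ext_in _ (fun _ => 0)), rsum_zero; [ring |].
  intros i _. rewrite (ind_false (vN_support N n (i :: w))); [ring |].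
  intros [Hl [Hi HF]]. apply Hw. simpl in Hl.
  split; [lia |]. split; [| exact (Forall_inv_tail HF)].
  destruct (Nat.eq_dec (n - 1) 0) as [H0 | H0]; [left; auto | right].
  destruct Hi as [Hi | Hi]; [lia |].
  replace n with (S (n - 1)) in Hi by lia. apply inI_tail in Hi; auto. lia.
Qed.

Lemma inX_single x : inX 1 1 [x].
Proof. split; [reflexivity |]. split; [lia |]. split; intros; simpl in *; lia. Qed.

Lemma inI_single i : (1 <= i)%nat -> inI 1 [i].
Proof.
  intros Hi. split; [constructor; auto |]. exists 1%nat.
  split; [reflexivity |]. split; [lia |]. split; intros; simpl in *; lia.
Qed.

(** Level [n = 1]: the defect on the empty word is the error of the Riemann
    sum [(1/N) Σ_{i=1}^N g(i/N)] for [∫_0^1 g]. *)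
Lemma astar_defect_level1 pi N p g : Cfunctional pi -> (1 <= N)%nat -> isD 1 p g ->
  Rabs (pi (astar_defect N 1 g [])) <= poly_lip (p 1%nat) / INR N.
Proof.
  intros P HN Hg.
  set (h := fun x => pi (g [x])).
  set (q := fun x => pi (peval (p 1%nat) [x])).
  assert (Hhq : forall x, box01 x -> h x = q x).
  { intros x Hx. unfold h, q. rewrite (proj1 (Hg 1%nat [x] (inX_single x))); [reflexivity |].
    constructor; [exact Hx | constructor]. }
  unfold astar_defect, DVsub. rewrite (cf_sub _ P), aStarN_coeff, vN_coeff by auto.
  rewrite (ind_true (vN_support N (1 - 1) []))
    by (split; [reflexivity | split; [left; reflexivity | constructor]]).
  simpl map. change (astar 1 g []) with (Cint (fun x => g [x]) 0 1). rewrite (cf_int _ P).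
  rewrite <- rsum_scal.
  rewrite (rsum_ext_in _ (fun i => / INR N * h (gridpt N i))).
  2: { intros i Hi. apply in_seq in Hi.
       assert (Hsupp : vN_support N 1 [i])
         by (split; [reflexivity | split; [right; apply inI_single; lia | repeat constructor; lia]]).
       rewrite (ind_true (inIw [i])) by (apply inI_single; lia).
       rewrite (ind_true _ Hsupp), <- (inv_sqrt_sq N) by auto. unfold h; simpl; ring. }
  rewrite rsum_scal. fold h. simpl pow.
  replace (_ - _) with (rsum (fun i => h (gridpt N i)) (seq 1 (N - 0)) / INR N - Rint h (gridpt N 0) 1)
    by (rewrite gridpt_0, Nat.sub_0_r; unfold Rdiv; ring).
  apply (riemann_tail_error h q); auto; try lia.
  - apply poly_lip_nonneg.
  - intros x. apply peval_continuous; auto.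
  - intros x y Hx Hy. apply peval_lip; auto.
  - intros x Hx. rewrite gridpt_0 in Hx. apply Hhq. unfold box01; lra.
Qed.

Lemma astar_cons k (g : CVfun) x xs : (1 <= k)%nat ->
  astar (S k) g (x :: xs) =
  Cadd (Cscale (ind (inX k 1 (x :: xs))) (Cint (fun t => g (t :: x :: xs)) 0 x))
       (Cint (fun t => g (t :: x :: xs)) x 1).
Proof. intros Hk. destruct k; [lia | reflexivity]. Qed.

Lemma seq_split j N : (1 <= j <= N)%nat -> seq 1 N = seq 1 (j - 1) ++ j :: seq (S j) (N - j).
Proof.
  intros H. replace N with ((j - 1) + S (N - j))%nat at 1 by lia. rewrite seq_app.
  f_equal. simpl. replace (S (j - 1)) with j by lia. reflexivity.
Qed.

Lemma prepend_weight N k i j w' : (1 <= k)%nat -> (1 <= i <= N)%nat -> vN_support N k (j :: w') ->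
  ind (inIw (i :: j :: w')) * ind (vN_support N (S k) (i :: j :: w')) =
  ind ((j < i)%nat \/ ((i < j)%nat /\ inXnat k 1 (j :: w'))).
Proof.
  intros Hk Hi [Hl [[Hk0 | Hw] HF]]; [lia |].
  assert (E1 : inIw (i :: j :: w') <-> inI (S k) (i :: j :: w'))
    by (unfold inIw; simpl length; simpl in Hl; rewrite Hl; tauto).
  assert (E2 : vN_support N (S k) (i :: j :: w') <-> inI (S k) (i :: j :: w')).
  { unfold vN_support. simpl in *. split; [intros [_ [[H | H] _]]; auto; lia |].
    intros H; split; [lia | split; [right; auto | constructor; auto; lia]]. }
  rewrite (ind_iff _ _ E1), (ind_iff _ _ E2), ind_idem.
  apply ind_iff, inI_cons_iff; auto; lia.
Qed.

Section HigherLevel.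

Variables (pi : C -> R) (N k : nat) (g : CVfun) (j : nat) (w' : list nat).
Hypothesis (Hpi : Cfunctional pi) (HN : (1 <= N)%nat) (Hk : (1 <= k)%nat)
  (Hsupp : vN_support N k (j :: w')).

Let y : list R := map (gridpt N) (j :: w').
Let h (x : R) : R := pi (g (x :: y)).

Lemma astar_defect_split :
  pi (astar_defect N (S k) g (j :: w')) =
  (/ sqrt (INR N)) ^ k *
    (ind (inXnat k 1 (j :: w')) *
       (rsum (fun i => h (gridpt N i)) (seq 1 (j - 1)) / INR N - Rint h 0 (gridpt N j))
     + (rsum (fun i => h (gridpt N i)) (seq (S j) (N - j)) / INR N - Rint h (gridpt N j) 1)).
Proof.
  pose proof Hsupp as [Hl [[Hk0 | [Hpos _]] HF]]; [lia |].
  pose proof (Forall_inv HF) as HjN. pose proof (Forall_inv Hpos) as Hj1. simpl in HjN, Hj1.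
  set (s := / sqrt (INR N)).
  set (incr := inXnat k 1 (j :: w')).
  unfold astar_defect, DVsub. rewrite (cf_sub _ Hpi), aStarN_coeff, vN_coeff by auto.
  replace (S k - 1)%nat with k by lia. rewrite (ind_true _ Hsupp).
  simpl map. rewrite astar_cons, (cf_add _ Hpi), (cf_scale _ Hpi), !(cf_int _ Hpi) by auto.
  rewrite (ind_iff (inX k 1 (gridpt N j :: map (gridpt N) w')) incr)
    by (symmetry; apply (inXnat_gridpt N k 1 (j :: w')); auto).
  rewrite (rsum_ext_in _ (fun i => s ^ S k *
             (ind ((j < i)%nat \/ ((i < j)%nat /\ incr)) * h (gridpt N i)))).
  2: { intros i Hi. apply in_seq in Hi. unfold incr.
       rewrite <- (prepend_weight N k i j w') by (auto; lia). unfold h, y, s; simpl; ring. }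
  rewrite (seq_split j N), rsum_app by lia. change (rsum ?f (j :: ?l)) with (f j + rsum f l); cbv beta.
  rewrite (ind_false ((j < j)%nat \/ _)) by lia.
  rewrite (rsum_ext_in _ (fun i => s ^ S k * (ind incr * h (gridpt N i))) (seq 1 (j - 1))).
  2: { intros i Hi. apply in_seq in Hi. f_equal. f_equal. apply ind_iff.
       split; [intros [H | [_ H]]; [lia | auto] | intros H; right; split; [lia | auto]]. }
  rewrite (rsum_ext_in _ (fun i => s ^ S k * h (gridpt N i)) (seq (S j) (N - j))).
  2: { intros i Hi. apply in_seq in Hi. rewrite ind_true by lia. ring. }
  rewrite !rsum_scal.
  assert (Hss : s * s = / INR N) by (apply inv_sqrt_sq; auto).
  change (fun x => pi (g (x :: gridpt N j :: map (gridpt N) w'))) with h.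
  unfold Rdiv. rewrite <- Hss. unfold s. simpl. ring.
Qed.

Variables (p : nat -> mpoly) (Lt : R).
Hypotheses (Hg : isD (S k) p g) (HLt : forall m, (m <= S k)%nat -> poly_lip (p m) <= Lt).

Lemma section_poly m x : box01 x -> inX (S k) m (x :: y) -> h x = pi (peval (p m) (x :: y)).
Proof.
  intros Hx HX. unfold h. rewrite (proj1 (Hg m _ HX)); [reflexivity |].
  constructor; [exact Hx |]. apply box_map_gridpt; auto. apply Hsupp.
Qed.

Lemma grid_facts : (1 <= j <= N)%nat /\ Forall box01 y /\ box01 (gridpt N j).
Proof.
  destruct Hsupp as [_ [[Hk0 | [Hpos _]] HF]]; [lia |].
  pose proof (Forall_inv HF) as HjN. pose proof (Forall_inv Hpos) as Hj1. simpl in HjN, Hj1.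
  split; [lia | split; [apply box_map_gridpt | apply gridpt_box]; auto].
Qed.

Let q (m' : nat) (x : R) : R := pi (peval (p m') (x :: y)).

Lemma piece_continuous m' x : continuous (q m') x.
Proof. apply peval_continuous; auto. Qed.

Lemma piece_lip m' : lip01 (q m') (poly_lip (p m')).
Proof. intros x x' Hx Hx'. apply peval_lip; auto. apply grid_facts. Qed.

Lemma Lt_nonneg : 0 <= Lt.
Proof. eapply Rle_trans; [apply poly_lip_nonneg | apply (HLt 0%nat); lia]. Qed.

(** Above [j/N] the new point is a first descent: if [j :: w'] lies in the
    chamber [m], then [x :: j/N :: ...] lies in the chamber [m + 1]. *)
Lemma tail_error :
  Rabs (rsum (fun i => h (gridpt N i)) (seq (S j) (N - j)) / INR N - Rint h (gridpt N j) 1)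
    <= Lt / INR N.
Proof.
  destruct grid_facts as [Hj [_ Hgj]].
  destruct Hsupp as [_ [[Hk0 | [_ [m Hm]]] _]]; [lia |].
  assert (HN' : 0 < / INR N) by (apply Rinv_0_lt_compat, lt_0_INR; lia).
  assert (Hmk : (S m <= S k)%nat) by (destruct Hm as [_ [? _]]; lia).
  eapply Rle_trans.
  - apply (riemann_tail_error h (q (S m))); auto using poly_lip_nonneg, piece_continuous, piece_lip;
      try lia.
    intros x Hx. apply section_poly; [unfold box01 in *; lra |].
    apply inX_cons_desc; [apply (inXnat_gridpt N); auto | exact (proj1 Hx)].
  - apply Rmult_le_compat_r; [lra | apply HLt; lia].
Qed.

(** Below [j/N] the point is admissible only when [j :: w'] is increasing,
    and then [x :: j/N :: ...] is increasing too (chamber [1]). *)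
Lemma head_error :
  Rabs (ind (inXnat k 1 (j :: w')) *
        (rsum (fun i => h (gridpt N i)) (seq 1 (j - 1)) / INR N - Rint h 0 (gridpt N j)))
    <= (Lt + poly_sup (p 1%nat)) / INR N.
Proof.
  destruct grid_facts as [Hj [Hy Hgj]].
  assert (HN' : 0 < / INR N) by (apply Rinv_0_lt_compat, lt_0_INR; lia).
  destruct (classic (inXnat k 1 (j :: w'))) as [Hinc | Hinc].
  - rewrite ind_true, Rmult_1_l by auto. eapply Rle_trans.
    + apply (riemann_head_error h (q 1%nat)); auto using poly_lip_nonneg, piece_continuous, piece_lip;
        try lia.
      * intros x Hx. apply section_poly; [unfold box01 in *; lra |].
        apply inX_cons_asc; [apply (inXnat_gridpt N); auto | exact (proj2 Hx) | lia].
      * apply peval_bound; auto.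
    + apply Rmult_le_compat_r; [lra |]. apply Rplus_le_compat_r, HLt; lia.
  - rewrite ind_false, Rmult_0_l, Rabs_R0 by auto.
    pose proof (poly_sup_nonneg (p 1%nat)). pose proof Lt_nonneg.
    unfold Rdiv; apply Rmult_le_pos; lra.
Qed.

Lemma astar_defect_higher :
  Rabs (pi (astar_defect N (S k) g (j :: w')))
    <= (/ sqrt (INR N)) ^ k * ((2 * Lt + poly_sup (p 1%nat)) / INR N).
Proof.
  assert (Hs : 0 <= (/ sqrt (INR N)) ^ k)
    by (apply pow_le; left; apply Rinv_0_lt_compat, sqrt_lt_R0, lt_0_INR; lia).
  rewrite astar_defect_split, Rabs_mult, Rabs_pos_eq by auto.
  apply Rmult_le_compat_l; auto.
  eapply Rle_trans; [apply Rabs_triang |].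
  pose proof head_error. pose proof tail_error. unfold Rdiv in *. lra.
Qed.

End HigherLevel.

Lemma vN_support_words N k w : vN_support N k w -> In w (words N k).
Proof.
  intros [Hl [Hi HF]]. rewrite <- Hl. apply words_in.
  destruct Hi as [H0 | [Hp _]].
  - subst. destruct w; [apply Forall_nil | simpl in *; lia].
  - clear Hl. induction w; constructor; inversion Hp; inversion HF; subst; auto.
Qed.

(** Sum of the Lipschitz constants of all pieces [g_{n,m}], [m <= n], and the
    resulting constant [B] of the coefficient bound. *)
Definition lip_total (n : nat) (p : nat -> mpoly) : R := rsum (fun m => poly_lip (p m)) (seq 0 (S n)).
Definition defect_const (n : nat) (p : nat -> mpoly) : R := 2 * lip_total n p + poly_sup (p 1%nat).

Lemma lip_total_ge n p m : (m <= n)%nat -> poly_lip (p m) <= lip_total n p.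
Proof.
  intros Hm. apply (rsum_ge_term (fun m => poly_lip (p m))); [intros; apply poly_lip_nonneg |].
  apply in_seq; lia.
Qed.

Lemma defect_const_nonneg n p : 0 <= defect_const n p.
Proof.
  unfold defect_const, lip_total. pose proof (poly_sup_nonneg (p 1%nat)).
  assert (0 <= rsum (fun m => poly_lip (p m)) (seq 0 (S n)))
    by (apply rsum_nonneg; intros; apply poly_lip_nonneg).
  lra.
Qed.

Lemma astar_defect_coeff pi N n p g w : Cfunctional pi -> (1 <= N)%nat -> (1 <= n)%nat -> isD n p g ->
  Rabs (pi (astar_defect N n g w)) <= (/ sqrt (INR N)) ^ (n - 1) * (defect_const n p / INR N).
Proof.
  intros P HN Hn Hg.
  assert (HN' : 0 < / INR N) by (apply Rinv_0_lt_compat, lt_0_INR; lia).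
  assert (Hs : 0 <= / sqrt (INR N)) by (left; apply Rinv_0_lt_compat, sqrt_lt_R0, lt_0_INR; lia).
  pose proof (defect_const_nonneg n p) as HB.
  destruct (classic (vN_support N (n - 1) w)) as [Hw | Hw].
  2: { rewrite astar_defect_outside, Rabs_R0 by auto.
       apply Rmult_le_pos; [apply pow_le; auto | unfold Rdiv; apply Rmult_le_pos; lra]. }
  destruct n as [|[|k]]; [lia | |].
  - destruct Hw as [Hl _]. destruct w; [| simpl in Hl; lia].
    eapply Rle_trans; [apply astar_defect_level1; eauto |]. simpl. rewrite Rmult_1_l.
    apply Rmult_le_compat_r; [lra |]. unfold defect_const.
    pose proof (lip_total_ge 1 p 1%nat (le_n 1)). pose proof (poly_lip_nonneg (p 1%nat)).
    pose proof (poly_sup_nonneg (p 1%nat)). lra.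
  - simpl in Hw |- *. destruct w as [|j w'].
    { destruct Hw as [Hl _]. simpl in Hl. lia. }
    apply (astar_defect_higher pi N (S k) g j w'); auto; try lia.
    intros m Hm. apply lip_total_ge; auto.
Qed.

(** Squared norm bound: [N^{n-1}] coefficients of size [N^{-(n-1)/2} B/N]. *)
Lemma defect_norm_arith N k B : (1 <= N)%nat -> 0 <= B ->
  2 * ((/ sqrt (INR N)) ^ k * (B / INR N)) ^ 2 * INR (N ^ k) <= ((2 * B + 1) / INR N) ^ 2.
Proof.
  intros HN HB. assert (HN' : 0 < INR N) by (apply lt_0_INR; lia).
  rewrite pow_INR.
  replace (2 * ((/ sqrt (INR N)) ^ k * (B / INR N)) ^ 2 * INR N ^ k)
    with (2 * (B / INR N) ^ 2 * ((/ sqrt (INR N) * / sqrt (INR N)) ^ k * INR N ^ k))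
    by (rewrite Rpow_mult_distr; ring).
  rewrite inv_sqrt_sq, <- Rpow_mult_distr, Rinv_l, pow1 by (auto; lra).
  unfold Rdiv. rewrite !Rpow_mult_distr.
  assert (0 < (/ INR N) ^ 2) by (apply pow_lt, Rinv_0_lt_compat; auto).
  simpl pow in *. nra.
Qed.

Theorem mainTheorem16 :
  forall (n : nat) (p : nat -> mpoly) (g : CVfun),
    (1 <= n)%nat -> isD n p g ->
    (forall (N : nat), (1 <= N)%nat ->
       forall w, aN N (vN N n g) w = vN N (S n) (acont n g) w)
    /\
    (exists Cst : R, Cst > 0 /\
       forall (N : nat), (1 <= N)%nat ->
         DVnorm_le (DVsub (aStarN N (vN N n g)) (vN N (n - 1) (astar n g)))
                   (Cst / INR N)).
Proof.
  intros n p g Hn Hg. split.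
  { intros N HN w. apply creation_identity; auto. }
  exists (2 * defect_const n p + 1).
  split; [pose proof (defect_const_nonneg n p); lra |].
  intros N HN. change (DVnorm_le (astar_defect N n g) ((2 * defect_const n p + 1) / INR N)).
  apply (DVnorm_le_of_support _ (words N (n - 1))
           ((/ sqrt (INR N)) ^ (n - 1) * (defect_const n p / INR N))).
  - intros w Hw. apply C_ext_functional; intros pi P. rewrite (cf_zero _ P).
    apply astar_defect_outside; auto. intros Hs. apply Hw, vN_support_words; auto.
  - intros w. split; apply astar_defect_coeff; auto using Cfunctional_fst, Cfunctional_snd.
  - rewrite words_length. apply defect_norm_arith; auto using defect_const_nonneg.
Qed.
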